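(* Let $X$ be a compact topological space, let $D\subseteq X$, let $\overline{D}$ be the closure of $D$ in $X$, and put $\partial D:=\overline{D}\setminus D$. Let $Y$ be a Hausdorff topological space and let $f\colon\overline{D}\to Y$ be a continuous map such that $f(D)$ is open in $Y$. For each $y\in Y\setminus f(\partial D)$, let $E_y$ denote the connected component of $y$ in $Y\setminus f(\partial D)$. Then $$f(\overline{D})\subseteq Y\setminus \bigcup_{y\in Y\setminus f(\overline{D})}E_y .$$
   Context: Note that $\partial D$ is defined as $\overline{D}\setminus D$; complements are taken in $Y$. *)

From mathcomp Require Import all_boot all_algebra.
From mathcomp Require Import all_classical all_reals all_analysis.
Set Implicit Arguments. Unset Strict Implicit. Unset Printing Implicit Defensive.

From mathcomp Require Import all_boot all_algebra.
From mathcomp Require Import all_classical all_reals all_analysis.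
Set Implicit Arguments. Unset Strict Implicit. Unset Printing Implicit Defensive.
Local Open Scope classical_set_scope.

(* f(closure D) is compact, hence closed in the Hausdorff space Y. Off
   f(boundary D), the sets f(D) and f(closure D) coincide, so f(D) is clopen
   in Y \ f(boundary D). A connected subset of Y \ f(boundary D) that meets
   f(closure D) therefore lies inside f(D), and cannot reach a point y outside
   f(closure D). *)

Lemma connected_clopen_subset (T : topologicalType) (C U V : set T) :
  connected C -> open U -> closed V -> C `&` U = C `&` V ->
  C `&` U !=set0 -> C `<=` U.
Proof.
move=> cC oU cV CUV CU0.
have -> : C = C `&` U by apply/esym/cC => //; [exists U | exists V].
exact: subIsetr.
Qed.

Lemma compact_image_closure (X Y : topologicalType) (D : set X) (f : X -> Y) :
  compact [set: X] -> {within closure D, continuous f} ->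
  compact (f @` closure D).
Proof.
move=> cX cf; apply: continuous_compact => //.
exact: subclosed_compact (@closed_closure _ D) cX _.
Qed.

Lemma imageI_image_setDC (X Y : Type) (D K : set X) (f : X -> Y) :
  f @` K `&` ~` (f @` (K `\` D)) `<=` f @` D.
Proof.
move=> _ [[x Kx <-] nfKD]; have [Dx|nDx] := pselect (D x); first by exists x.
by exfalso; apply: nfKD; exists x.
Qed.

Theorem mainTheorem2 (X Y : topologicalType) (D : set X) (f : X -> Y) :
  compact [set: X] ->
  hausdorff_space Y ->
  {within closure D, continuous f} ->
  open (f @` D) ->
  f @` closure D `<=`
    ~` \bigcup_(y in ~` (f @` closure D))
          connected_component (~` (f @` (closure D `\` D))) y.
Proof.
move=> cX hY cf oD z fDz [y nfDy [C [Cy CA cC] Cz]].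
have fD_sub : f @` D `<=` f @` closure D.
  by apply: image_subset; exact: subset_closure.
have fD_off_boundary w : C w -> (f @` closure D) w -> (f @` D) w.
  by move=> Cw fDw; apply: (@imageI_image_setDC _ _ D (closure D) f); split => //; exact: CA.
have fclD_closed : closed (f @` closure D).
  exact: compact_closed hY (compact_image_closure cX cf).
have C_fD : C `<=` f @` D.
  apply: (connected_clopen_subset cC oD fclD_closed).
  - by apply/seteqP; split=> w [Cw fw]; split=> //; [exact: fD_sub | exact: fD_off_boundary].
  - by exists z; split=> //; exact: fD_off_boundary.
exact/nfDy/fD_sub/C_fD.
Qed.
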